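(* Along the principal part of any cohomogeneity one gradient Ricci soliton of class $C^3$ as in the context, the function $$\mathscr F:=v^{2/n}\big(S+\mathrm{tr}((L^{(0)})^2)\big)$$ satisfies $$\dot{\mathscr F}=-2\,v^{2/n}\,\mathrm{tr}\big((L^{(0)})^2\big)\Big(\xi-\tfrac{1}{n}\mathrm{tr}L\Big).$$ In particular $\mathscr F$ is non-decreasing on any interval where $\xi\le\frac1n\mathrm{tr}L$.
   Context: Setup: $G$ compact Lie group acting isometrically with cohomogeneity one on $(M^{n+1},\bar g)$, principal orbit $G/K$ of dimension $n$; $u$ $G$-invariant with $\mathrm{Ric}(\bar g)+\mathrm{Hess}\,u+\frac{\epsilon}{2}\bar g=0$. On the principal part $I\times G/K$, $\bar g=dt^2+g_t$, $u=u(t)$; $L$ is the shape operator ($\dot g_t=2g_tL$), $L^{(0)}=L-\frac{\mathrm{tr}L}{n}\mathrm I$ its trace-free part, $S$ the scalar curvature of $g_t$, $v(t)=\sqrt{\det g_t}$ the relative volume with respect to a fixed $G$-invariant background metric on $G/K$ (so $\dot v=(\mathrm{tr}L)v$), $\xi=-\dot u+\mathrm{tr}L$. The equations $r_t-\dot L+(\dot u-\mathrm{tr}L)L+\frac{\epsilon}{2}\mathrm I=0$, $-\mathrm{tr}\dot L-\mathrm{tr}(L^2)+\ddot u+\frac{\epsilon}{2}=0$ and the conservation law $\ddot u+(-\dot u+\mathrm{tr}L)\dot u-\epsilon u=C$ ($C$ constant) hold, where $r_t$ is the Ricci endomorphism of $g_t$. *)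

From Stdlib Require Import Reals Lra.
Open Scope R_scope.

Fixpoint rsum (n : nat) (f : nat -> R) : R :=
  match n with
  | O => 0
  | S k => rsum k f + f k
  end.

Definition mat := nat -> nat -> R.

Definition delta (i j : nat) : R := if Nat.eqb i j then 1 else 0.

Definition mmul (n : nat) (A B : mat) : mat :=
  fun i j => rsum n (fun k => A i k * B k j).

Definition mtr (n : nat) (A : mat) : R := rsum n (fun i => A i i).

Definition minor (A : mat) (j : nat) : mat :=
  fun r c => A (S r) (if Nat.ltb c j then c else S c).

Fixpoint det (n : nat) (A : mat) : R :=
  match n with
  | O => 1
  | S k => rsum (S k) (fun j => (-1) ^ j * A O j * det k (minor A j))
  end.

Definition tracefree (n : nat) (A : mat) : mat :=
  fun i j => A i j - mtr n A / INR n * delta i j.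

(* g = Lie(G) has basis e_0 .. e_(n+m-1) with structure constants c:   *)
(*   [e_i, e_j] = sum_k c i j k e_k.                                   *)
(* p = span(e_0..e_(n-1)) is the reductive complement (identified with *)
(* the tangent space of G/K at eK), k = span(e_n..e_(n+m-1)) = Lie(K). *)
(* e_0..e_(n-1) is orthonormal for the fixed G-invariant background    *)
(* metric on G/K.                                                      *)

Definition is_lie_algebra (N : nat) (c : nat -> nat -> nat -> R) : Prop :=
  (forall i j k, (i < N)%nat -> (j < N)%nat -> (k < N)%nat ->
     c i j k = - c j i k) /\
  (forall i j k r, (i < N)%nat -> (j < N)%nat -> (k < N)%nat -> (r < N)%nat ->
     rsum N (fun l => c i j l * c l k r + c j k l * c l i r + c k i l * c l j r) = 0).

(* G compact (at the Lie algebra level): g carries an ad-invariant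
   positive definite inner product Q. *)
Definition compact_type (N : nat) (c : nat -> nat -> nat -> R) : Prop :=
  exists Q : mat,
    (forall i j, (i < N)%nat -> (j < N)%nat -> Q i j = Q j i) /\
    (forall x : nat -> R, (exists i, (i < N)%nat /\ x i <> 0) ->
       rsum N (fun i => rsum N (fun j => x i * Q i j * x j)) > 0) /\
    (forall i j k, (i < N)%nat -> (j < N)%nat -> (k < N)%nat ->
       rsum N (fun l => c i j l * Q l k) + rsum N (fun l => c i k l * Q j l) = 0).

(* k is a subalgebra and [k, p] ⊆ p (reductive decomposition). *)
Definition reductive (n m : nat) (c : nat -> nat -> nat -> R) : Prop :=
  (forall a b i, (n <= a < n + m)%nat -> (n <= b < n + m)%nat -> (i < n)%nat ->
     c a b i = 0) /\
  (forall a i b, (n <= a < n + m)%nat -> (i < n)%nat -> (n <= b < n + m)%nat ->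
     c a i b = 0).

(* An inner product on p (Gram matrix h in the basis e_0..e_(n-1)) is
   ad(k)-invariant, i.e. it defines a G-invariant metric on G/K
   (at the Lie algebra level). *)
Definition k_invariant (n m : nat) (c : nat -> nat -> nat -> R) (h : mat) : Prop :=
  forall a i j, (n <= a < n + m)%nat -> (i < n)%nat -> (j < n)%nat ->
    rsum n (fun k => c a i k * h k j) + rsum n (fun k => c a j k * h i k) = 0.

Definition sym_posdef (n : nat) (h : mat) : Prop :=
  (forall i j, (i < n)%nat -> (j < n)%nat -> h i j = h j i) /\
  (forall x : nat -> R, (exists i, (i < n)%nat /\ x i <> 0) ->
     rsum n (fun i => rsum n (fun j => x i * h i j * x j)) > 0).

Definition killing (N : nat) (c : nat -> nat -> nat -> R) (a b : nat) : R :=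
  rsum N (fun k => rsum N (fun l => c a k l * c b l k)).

(* Ricci tensor (as bilinear form, Gram matrix in e_0..e_(n-1)) of the
   G-invariant metric on G/K with Gram matrix h (inverse hinv), given by
   the standard formula for G unimodular (Besse, Einstein Manifolds, 7.38):
   Ric(X,Y) = -1/2 sum_i h([X,X_i]_p,[Y,X_i]_p) - 1/2 B(X,Y)
              + 1/4 sum_{i,j} h([X_i,X_j]_p,X) h([X_i,X_j]_p,Y),
   (X_i) an h-orthonormal basis of p. *)
Definition ricci_form (n m : nat) (c : nat -> nat -> nat -> R) (h hinv : mat) : mat :=
  fun a b =>
    - / 2 * rsum n (fun i => rsum n (fun j => hinv i j *
              rsum n (fun k => rsum n (fun l => c a i k * c b j l * h k l))))
    - / 2 * killing (n + m) c a b
    + / 4 * rsum n (fun i => rsum n (fun i' => rsum n (fun j => rsum n (fun j' =>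
              hinv i i' * hinv j j' *
              rsum n (fun k => c i j k * h k a) *
              rsum n (fun k => c i' j' k * h k b))))).

Definition ricci_endo (n m : nat) (c : nat -> nat -> nat -> R) (h hinv : mat) : mat :=
  mmul n hinv (ricci_form n m c h hinv).

Definition scal (n m : nat) (c : nat -> nat -> nat -> R) (h hinv : mat) : R :=
  mtr n (ricci_endo n m c h hinv).

(* Along the curve of metrics, (v^(2/n))' = (2/n) tr L v^(2/n), and the explicit formula for
   the Ricci tensor of an invariant metric gives the first variation S' = -2 tr (r L): the
   bracket term -1/4 |[.,.]|^2 of S varies through g and g^-1 (the two g^-1 slots contribute
   equally by antisymmetry of the bracket), the Killing term only through g^-1.  Moreover
   (tr L0^2)' = 2 tr (L L') - (2/n) tr L tr L'.  Substituting L' = r + (u' - tr L) L + eps/2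
   from the soliton equation, the terms tr (r L) cancel and F' = -2 v^(2/n) tr L0^2 (xi - tr L/n).
   Monotonicity follows by the mean value theorem, since tr L0^2 >= 0 for the g-self-adjoint
   L0: a Gram decomposition of g^-1 writes it as a sum of squares. *)

From Stdlib Require Import Reals Lra Lia Classical.
From mathcomp Require ssreflect ssrbool ssrfun eqtype ssrnat seq fintype bigop ssralg matrix.
From mathcomp Require Rstruct.
Open Scope R_scope.

Lemma rsum_ext n f g : (forall i, (i < n)%nat -> f i = g i) -> rsum n f = rsum n g.
Proof.
  induction n as [|n IH]; intros H; simpl; [reflexivity|].
  rewrite IH, H; [reflexivity | lia | intros; apply H; lia].
Qed.

Lemma rsum_plus n f g : rsum n (fun i => f i + g i) = rsum n f + rsum n g.
Proof. induction n; simpl; [ring|]. rewrite IHn; ring. Qed.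

Lemma rsum_minus n f g : rsum n (fun i => f i - g i) = rsum n f - rsum n g.
Proof. induction n; simpl; [ring|]. rewrite IHn; ring. Qed.

Lemma rsum_opp n f : rsum n (fun i => - f i) = - rsum n f.
Proof. induction n; simpl; [ring|]. rewrite IHn; ring. Qed.

Lemma rsum_scal_l n a f : rsum n (fun i => a * f i) = a * rsum n f.
Proof. induction n; simpl; [ring|]. rewrite IHn; ring. Qed.

Lemma rsum_scal_r n a f : rsum n (fun i => f i * a) = rsum n f * a.
Proof. induction n; simpl; [ring|]. rewrite IHn; ring. Qed.

Lemma rsum_const n a : rsum n (fun _ => a) = INR n * a.
Proof. induction n; simpl rsum; [simpl; ring|]. rewrite IHn, S_INR. ring. Qed.

Lemma rsum_eq0 n f : (forall i, (i < n)%nat -> f i = 0) -> rsum n f = 0.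
Proof.
  intros H. rewrite (rsum_ext n f (fun _ => 0)) by exact H.
  rewrite rsum_const; ring.
Qed.

Lemma rsum_nonneg n f : (forall i, (i < n)%nat -> 0 <= f i) -> 0 <= rsum n f.
Proof.
  induction n; intros H; simpl; [lra|].
  assert (0 <= f n) by (apply H; lia).
  assert (0 <= rsum n f) by (apply IHn; intros; apply H; lia). lra.
Qed.

Lemma rsum_comm n m (f : nat -> nat -> R) :
  rsum n (fun i => rsum m (fun j => f i j)) = rsum m (fun j => rsum n (fun i => f i j)).
Proof.
  induction n; simpl.
  - symmetry; apply rsum_eq0; reflexivity.
  - rewrite IHn, <- rsum_plus. reflexivity.
Qed.

Lemma rsum_shift n f : rsum (S n) f = f O + rsum n (fun i => f (S i)).
Proof. induction n; simpl in *; [ring|]. rewrite IHn. ring. Qed.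

Lemma rsum_mult n f g : rsum n f * rsum n g = rsum n (fun i => rsum n (fun j => f i * g j)).
Proof. rewrite <- rsum_scal_r. apply rsum_ext; intros. rewrite <- rsum_scal_l. reflexivity. Qed.

Lemma rsum_scal_lr n a b f : a * rsum n f * b = rsum n (fun e => a * f e * b).
Proof. rewrite <- rsum_scal_l, <- rsum_scal_r. apply rsum_ext; intros; ring. Qed.

Lemma rsum2_plus n (f g : nat -> nat -> R) :
  rsum n (fun i => rsum n (fun j => f i j + g i j))
  = rsum n (fun i => rsum n (fun j => f i j)) + rsum n (fun i => rsum n (fun j => g i j)).
Proof. rewrite <- rsum_plus. apply rsum_ext; intros. apply rsum_plus. Qed.

Lemma rsum2_scal_l n a (f : nat -> nat -> R) :
  a * rsum n (fun x => rsum n (fun y => f x y))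
  = rsum n (fun x => rsum n (fun y => a * f x y)).
Proof. rewrite <- rsum_scal_l. apply rsum_ext; intros. symmetry; apply rsum_scal_l. Qed.

Lemma rsum3_scal_l n a (f : nat -> nat -> nat -> R) :
  a * rsum n (fun x => rsum n (fun y => rsum n (fun z => f x y z)))
  = rsum n (fun x => rsum n (fun y => rsum n (fun z => a * f x y z))).
Proof. rewrite <- rsum_scal_l. apply rsum_ext; intros. apply rsum2_scal_l. Qed.

Lemma rsum4_scal_l n a (f : nat -> nat -> nat -> nat -> R) :
  a * rsum n (fun x => rsum n (fun y => rsum n (fun z => rsum n (fun w => f x y z w))))
  = rsum n (fun x => rsum n (fun y => rsum n (fun z => rsum n (fun w => a * f x y z w)))).
Proof. rewrite <- rsum_scal_l. apply rsum_ext; intros. apply rsum3_scal_l. Qed.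

Lemma rsum2_lincomb n x y z (f1 f2 f3 f4 : nat -> nat -> R) :
  rsum n (fun i => rsum n (fun k => f1 i k + x * f2 i k + y * f3 i k + z * f4 i k))
  = rsum n (fun i => rsum n (fun k => f1 i k)) + x * rsum n (fun i => rsum n (fun k => f2 i k))
  + y * rsum n (fun i => rsum n (fun k => f3 i k)) + z * rsum n (fun i => rsum n (fun k => f4 i k)).
Proof. rewrite !rsum2_plus, !rsum2_scal_l. reflexivity. Qed.

Lemma rsum3_rot n (f : nat -> nat -> nat -> R) :
  rsum n (fun a => rsum n (fun b => rsum n (fun c => f a b c)))
  = rsum n (fun c => rsum n (fun a => rsum n (fun b => f a b c))).
Proof.
  transitivity (rsum n (fun a => rsum n (fun c => rsum n (fun b => f a b c)))).
  - apply rsum_ext; intros; apply rsum_comm.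
  - apply rsum_comm.
Qed.

Lemma rsum4_rot n (f : nat -> nat -> nat -> nat -> R) :
  rsum n (fun a => rsum n (fun b => rsum n (fun c => rsum n (fun d => f a b c d))))
  = rsum n (fun d => rsum n (fun a => rsum n (fun b => rsum n (fun c => f a b c d)))).
Proof.
  transitivity (rsum n (fun a => rsum n (fun d => rsum n (fun b => rsum n (fun c => f a b c d))))).
  - apply rsum_ext; intros; apply rsum3_rot.
  - apply rsum_comm.
Qed.

Lemma rsum5_rot n (f : nat -> nat -> nat -> nat -> nat -> R) :
  rsum n (fun a => rsum n (fun b => rsum n (fun c => rsum n (fun d => rsum n (fun e => f a b c d e)))))
  = rsum n (fun e => rsum n (fun a => rsum n (fun b => rsum n (fun c => rsum n (fun d => f a b c d e))))).
Proof.
  transitivity (rsum n (fun a => rsum n (fun e => rsum n (fun b => rsum n (fun c => rsum n (fun d => f a b c d e)))))).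
  - apply rsum_ext; intros; apply rsum4_rot.
  - apply rsum_comm.
Qed.

Lemma delta_refl i : delta i i = 1.
Proof. unfold delta. rewrite Nat.eqb_refl. reflexivity. Qed.

Lemma delta_neq i j : i <> j -> delta i j = 0.
Proof. intros H. unfold delta. destruct (Nat.eqb_spec i j); [contradiction|reflexivity]. Qed.

Lemma delta_sym i j : delta i j = delta j i.
Proof. unfold delta. rewrite Nat.eqb_sym. reflexivity. Qed.

Lemma rsum_delta_l n i f : (i < n)%nat -> rsum n (fun j => delta i j * f j) = f i.
Proof.
  induction n; intros H; [lia|]. simpl. destruct (Nat.eq_dec i n) as [->|Hne].
  - rewrite rsum_eq0, delta_refl; [ring|]. intros j Hj. rewrite delta_neq by lia. ring.
  - rewrite IHn, delta_neq by lia. ring.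
Qed.

Lemma rsum_delta_r n i f : (i < n)%nat -> rsum n (fun j => f j * delta j i) = f i.
Proof.
  intros H. rewrite <- (rsum_delta_l n i f H).
  apply rsum_ext. intros. rewrite delta_sym. ring.
Qed.

Definition msym n (A : mat) := forall a b, (a < n)%nat -> (b < n)%nat -> A a b = A b a.

Definition is_inverse n (A B : mat) :=
  forall i j, (i < n)%nat -> (j < n)%nat -> mmul n A B i j = delta i j.

Lemma mmul_ext n A A' B B' i j :
  (forall k, (k < n)%nat -> A i k = A' i k) -> (forall k, (k < n)%nat -> B k j = B' k j) ->
  mmul n A B i j = mmul n A' B' i j.
Proof. intros HA HB. unfold mmul. apply rsum_ext. intros. rewrite HA, HB; auto. Qed.

Lemma mmul_assoc n A B C i j : mmul n A (mmul n B C) i j = mmul n (mmul n A B) C i j.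
Proof.
  unfold mmul. transitivity (rsum n (fun k => rsum n (fun l => A i k * B k l * C l j))).
  - apply rsum_ext; intros. rewrite <- rsum_scal_l. apply rsum_ext; intros. ring.
  - rewrite rsum_comm. apply rsum_ext; intros. rewrite <- rsum_scal_r. reflexivity.
Qed.

Lemma mmul_delta_l n A i j : (i < n)%nat -> mmul n delta A i j = A i j.
Proof. intros. unfold mmul. apply (rsum_delta_l n i (fun k => A k j)); auto. Qed.

Lemma mmul_delta_r n A i j : (j < n)%nat -> mmul n A delta i j = A i j.
Proof. intros. unfold mmul. apply (rsum_delta_r n j (fun k => A i k)); auto. Qed.

Lemma mtr_mmul_comm n A B : mtr n (mmul n A B) = mtr n (mmul n B A).
Proof. unfold mtr, mmul. rewrite rsum_comm. do 2 (apply rsum_ext; intros). ring. Qed.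

Lemma mtr_tracefree_sq n A : (n <> 0)%nat ->
  mtr n (mmul n (tracefree n A) (tracefree n A)) = mtr n (mmul n A A) - (mtr n A) ^ 2 / INR n.
Proof.
  intros Hn0. assert (Hn : INR n <> 0) by (apply not_0_INR; lia).
  unfold mtr at 1 2, mmul at 1 2, tracefree.
  transitivity (rsum n (fun i => rsum n (fun k => A i k * A k i
      + (- (mtr n A / INR n)) * (delta i k * A k i)
      + (- (mtr n A / INR n)) * (A i k * delta k i)
      + (mtr n A / INR n) ^ 2 * (delta i k * delta k i)))).
  { do 2 (apply rsum_ext; intros). ring. }
  rewrite rsum2_lincomb.
  rewrite (rsum_ext n (fun i => rsum n (fun k => delta i k * A k i)) (fun i => A i i))
    by (intros; apply (rsum_delta_l n _ (fun k => A k _)); auto).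
  rewrite (rsum_ext n (fun i => rsum n (fun k => A i k * delta k i)) (fun i => A i i))
    by (intros; apply (rsum_delta_r n _ (fun k => A _ k)); auto).
  rewrite (rsum_ext n (fun i => rsum n (fun k => delta i k * delta k i)) (fun _ => 1))
    by (intros; rewrite (rsum_delta_l n _ (fun k => delta k _)); auto; apply delta_refl).
  rewrite rsum_const. fold (mtr n A). field; auto.
Qed.

Lemma D_ext_loc f g t l : (exists d, 0 < d /\ forall s, Rabs (s - t) < d -> f s = g s) ->
  derivable_pt_lim f t l -> derivable_pt_lim g t l.
Proof.
  intros [d [Hd Hfg]] Hf eps Heps. destruct (Hf eps Heps) as [del Hdel].
  assert (Hm : 0 < Rmin del d) by (apply Rmin_pos; [apply cond_pos|lra]).
  exists (mkposreal _ Hm). intros h Hh0 Hh. simpl in Hh.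
  rewrite <- !Hfg. apply Hdel; auto. apply Rlt_le_trans with (1 := Hh), Rmin_l.
  - unfold Rminus; rewrite Rplus_opp_r, Rabs_R0; lra.
  - replace (t + h - t) with h by ring. apply Rlt_le_trans with (1 := Hh), Rmin_r.
Qed.

Lemma D_ext f g t l : (forall s, f s = g s) -> derivable_pt_lim f t l -> derivable_pt_lim g t l.
Proof. intros H. apply D_ext_loc. exists 1. split; [lra|]. auto. Qed.

Lemma D_eq f t a b : derivable_pt_lim f t a -> a = b -> derivable_pt_lim f t b.
Proof. intros H ->; exact H. Qed.

Lemma D_const a t : derivable_pt_lim (fun _ => a) t 0.
Proof. apply derivable_pt_lim_const. Qed.

Lemma D_plus f g t a b : derivable_pt_lim f t a -> derivable_pt_lim g t b ->
  derivable_pt_lim (fun s => f s + g s) t (a + b).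
Proof. apply derivable_pt_lim_plus. Qed.

Lemma D_minus f g t a b : derivable_pt_lim f t a -> derivable_pt_lim g t b ->
  derivable_pt_lim (fun s => f s - g s) t (a - b).
Proof. apply derivable_pt_lim_minus. Qed.

Lemma D_mult f g t a b : derivable_pt_lim f t a -> derivable_pt_lim g t b ->
  derivable_pt_lim (fun s => f s * g s) t (a * g t + f t * b).
Proof. apply derivable_pt_lim_mult. Qed.

Lemma D_scal a f t l : derivable_pt_lim f t l -> derivable_pt_lim (fun s => a * f s) t (a * l).
Proof.
  intros H. replace (a * l) with (0 * f t + a * l) by ring.
  apply D_mult; [apply D_const | exact H].
Qed.

Lemma D_div f g t a b : derivable_pt_lim f t a -> derivable_pt_lim g t b -> g t <> 0 ->
  derivable_pt_lim (fun s => f s / g s) t ((a * g t - b * f t) / Rsqr (g t)).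
Proof. apply derivable_pt_lim_div. Qed.

Lemma D_exp f t a : derivable_pt_lim f t a ->
  derivable_pt_lim (fun s => exp (f s)) t (exp (f t) * a).
Proof. intros H. apply (derivable_pt_lim_comp f exp); [exact H | apply derivable_pt_lim_exp]. Qed.

Lemma D_ln f t a : 0 < f t -> derivable_pt_lim f t a ->
  derivable_pt_lim (fun s => ln (f s)) t (a / f t).
Proof.
  intros Hp H. unfold Rdiv. rewrite Rmult_comm.
  apply (derivable_pt_lim_comp f ln); [exact H | apply derivable_pt_lim_ln; exact Hp].
Qed.

Lemma D_sqrt f t a : 0 < f t -> derivable_pt_lim f t a ->
  derivable_pt_lim (fun s => sqrt (f s)) t (a / (2 * sqrt (f t))).
Proof.
  intros Hp H. unfold Rdiv. rewrite Rmult_comm.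
  apply (derivable_pt_lim_comp f sqrt); [exact H | apply derivable_pt_lim_sqrt; exact Hp].
Qed.

Lemma D_rsum n (f : R -> nat -> R) f' t :
  (forall i, (i < n)%nat -> derivable_pt_lim (fun s => f s i) t (f' i)) ->
  derivable_pt_lim (fun s => rsum n (f s)) t (rsum n f').
Proof.
  induction n; intros H; simpl; [apply D_const|].
  apply D_plus; [apply IHn; intros; apply H | apply H]; lia.
Qed.

Lemma D_rsum_ex n (f : R -> nat -> R) t :
  (forall i, (i < n)%nat -> exists l, derivable_pt_lim (fun s => f s i) t l) ->
  exists l, derivable_pt_lim (fun s => rsum n (f s)) t l.
Proof.
  induction n; intros H; simpl; [exists 0; apply D_const|].
  destruct IHn as [l1 H1]; [intros; apply H; lia|].
  destruct (H n) as [l2 H2]; [lia|].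
  exists (l1 + l2). apply D_plus; auto.
Qed.

Lemma nondecreasing_of_derivative f f' t0 t1 :
  (forall t, t0 < t < t1 -> derivable_pt_lim f t (f' t)) ->
  forall a b, t0 < a -> a <= b -> b < t1 -> (forall s, a <= s <= b -> 0 <= f' s) -> f a <= f b.
Proof.
  intros Hd a b Ha Hab Hb Hpos. destruct (Req_dec a b) as [->|Hne]; [lra|].
  destruct (MVT_cor2 f f' a b) as [z [Hz Hz2]]; [lra | intros; apply Hd; lra |].
  assert (0 <= f' z * (b - a)) by (apply Rmult_le_pos; [apply Hpos | ]; lra).
  lra.
Qed.

Lemma det_S k A : det (S k) A = rsum (S k) (fun j => (-1) ^ j * A O j * det k (minor A j)).
Proof. reflexivity. Qed.

Lemma det_ext n A B : (forall i j, (i < n)%nat -> (j < n)%nat -> A i j = B i j) ->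
  det n A = det n B.
Proof.
  revert A B; induction n; intros A B H; [reflexivity|]. rewrite !det_S.
  apply rsum_ext; intros j Hj. rewrite H by lia. f_equal.
  apply IHn. intros r c Hr Hc. unfold minor. apply H; [lia|].
  destruct (Nat.ltb c j); lia.
Qed.

Lemma det_delta n : det n delta = 1.
Proof.
  induction n; [reflexivity|]. rewrite det_S, rsum_shift, rsum_eq0.
  - simpl. rewrite (det_ext n (minor delta 0) delta), IHn, delta_refl; [ring|].
    intros i j _ _. reflexivity.
  - intros i Hi. rewrite delta_neq by lia. ring.
Qed.

Lemma det_col0_eq0 n A : (1 <= n)%nat -> (forall i, (i < n)%nat -> A i O = 0) -> det n A = 0.
Proof.
  revert A; induction n; intros A Hn H; [lia|]. rewrite det_S, rsum_shift, H by lia.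
  rewrite rsum_eq0; [ring|]. intros j Hj. rewrite IHn; [ring|lia|].
  intros i Hi. unfold minor. replace (Nat.ltb 0 (S j)) with true by (symmetry; apply Nat.ltb_lt; lia).
  apply H; lia.
Qed.

Lemma det_derivable n (A : R -> mat) t :
  (forall i j, (i < n)%nat -> (j < n)%nat -> exists l, derivable_pt_lim (fun s => A s i j) t l) ->
  exists l, derivable_pt_lim (fun s => det n (A s)) t l.
Proof.
  revert A; induction n; intros A H; [exists 0; exact (D_const 1 t)|].
  apply (D_rsum_ex (S n) (fun s j => (-1) ^ j * A s O j * det n (minor (A s) j))).
  intros j Hj.
  destruct (H O j) as [l1 H1]; try lia.
  destruct (IHn (fun s => minor (A s) j)) as [l2 H2].
  { intros r c Hr Hc. unfold minor. apply H; [lia|]. destruct (Nat.ltb c j); lia. }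
  eexists. apply D_mult; [apply D_scal, H1 | exact H2].
Qed.

(* Jacobi's formula at the identity: expanding along the first row, only the diagonal
   cofactor contributes to first order. *)
Lemma D_det_at_delta n (A : R -> mat) Ad t :
  (forall i j, (i < n)%nat -> (j < n)%nat -> A t i j = delta i j) ->
  (forall i j, (i < n)%nat -> (j < n)%nat -> derivable_pt_lim (fun s => A s i j) t (Ad i j)) ->
  derivable_pt_lim (fun s => det n (A s)) t (mtr n Ad).
Proof.
  revert A Ad; induction n; intros A Ad H0 H; [exact (D_const 1 t)|].
  apply D_ext with (fun s => (-1) ^ 0 * A s 0%nat 0%nat * det n (minor (A s) 0)
      + rsum n (fun j => (-1) ^ (S j) * A s 0%nat (S j) * det n (minor (A s) (S j)))).
  { intros s. rewrite det_S, rsum_shift. reflexivity. }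
  assert (Hminor0 : forall i j, (i < n)%nat -> (j < n)%nat -> minor (A t) 0 i j = delta i j)
    by (intros; unfold minor; simpl; rewrite H0 by lia; reflexivity).
  unfold mtr. rewrite rsum_shift.
  replace (Ad 0%nat 0%nat + rsum n (fun i => Ad (S i) (S i)))
    with (((-1)^0 * Ad 0%nat 0%nat) * det n (minor (A t) 0)
          + ((-1)^0 * A t 0%nat 0%nat) * mtr n (minor Ad 0) + rsum n (fun j => 0)).
  2:{ rewrite rsum_eq0, H0, delta_refl, (det_ext n _ delta), det_delta by (auto; lia).
      unfold mtr, minor. simpl. ring. }
  apply D_plus.
  - apply (D_mult (fun s => (-1)^0 * A s 0%nat 0%nat) (fun s => det n (minor (A s) 0))).
    + apply (D_scal _ (fun s => A s 0%nat 0%nat)). apply H; lia.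
    + apply IHn; [exact Hminor0|]. intros i j Hi Hj. unfold minor; simpl. apply H; lia.
  - apply D_rsum. intros j Hj.
    destruct (det_derivable n (fun s => minor (A s) (S j)) t) as [l2 H2].
    { intros r c Hr Hc. unfold minor. eexists. apply H; [lia|]. destruct (Nat.ltb c (S j)); lia. }
    replace 0 with (((-1)^(S j) * Ad 0%nat (S j)) * det n (minor (A t) (S j))
                    + ((-1)^(S j) * A t 0%nat (S j)) * l2).
    2:{ rewrite H0, delta_neq, det_col0_eq0; try lia; [ring|].
        intros i Hi. unfold minor. replace (Nat.ltb 0 (S j)) with true by (symmetry; apply Nat.ltb_lt; lia).
        rewrite H0 by lia. apply delta_neq; lia. }
    apply (D_mult (fun s => (-1)^(S j) * A s 0%nat (S j)) (fun s => det n (minor (A s) (S j)))).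
    + apply (D_scal _ (fun s => A s 0%nat (S j))). apply H; lia.
    + exact H2.
Qed.

Definition submatrix (h : mat) (r c : nat) : mat :=
  fun a b => h (if Nat.ltb a r then a else S a) (if Nat.ltb b c then b else S b).

Module MathCompBridge.
Import ssreflect ssrbool ssrfun eqtype ssrnat seq fintype bigop ssralg matrix.
Import Rstruct. Import GRing.Theory.
Local Open Scope ring_scope.

Definition mx n (A : mat) : 'M[R]_n := \matrix_(i < n, j < n) A i j.

Lemma rsum_big n f : rsum n f = \sum_(i < n) f i.
Proof. elim: n => [|n IH]; first by rewrite big_ord0. by rewrite big_ord_recr /= -IH. Qed.

Lemma pow_exprn (x : R) k : (x ^ k)%R = x ^+ k.
Proof. elim: k => [|k IH] //=. by rewrite exprS IH. Qed.

Lemma bump_ltb (j c : nat) : bump j c = (if Nat.ltb c j then c else c.+1).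
Proof.
  rewrite /bump. case: (ltnP c j) => H.
  - have -> : Nat.ltb c j = true by apply/Nat.ltb_lt/ltP. done.
  - have -> : Nat.ltb c j = false by apply/Nat.ltb_ge/leP. by rewrite add1n.
Qed.

Lemma det_mx n A : \det (mx n A) = det n A.
Proof.
  elim: n A => [|k IH] A; first by rewrite det_mx00.
  rewrite (expand_det_row _ ord0) det_S rsum_big. apply: eq_bigr => j _.
  rewrite /cofactor !mxE -pow_exprn.
  have -> : row' ord0 (col' j (mx k.+1 A)) = mx k (minor A j).
    by apply/matrixP => r c; rewrite !mxE /minor /= -bump_ltb.
  rewrite IH add0n mulrA; congr (_ * _); exact: mulrC.
Qed.

Lemma mx_mmul n X Y : mx n (mmul n X Y) = mx n X *m mx n Y.
Proof. apply/matrixP => i j. rewrite !mxE /mmul rsum_big. apply: eq_bigr => k _. by rewrite !mxE. Qed.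

Lemma det_mmul n X Y : det n (mmul n X Y) = Rmult (det n X) (det n Y).
Proof. by rewrite -!det_mx mx_mmul det_mulmx. Qed.

Lemma det_mul_inverse k h hinv : is_inverse k.+1 h hinv ->
  forall i j, (i < k.+1)%coq_nat -> (j < k.+1)%coq_nat ->
    Rmult (det k.+1 h) (hinv i j) = Rmult ((-1) ^ (i + j)%coq_nat)%R (det k (submatrix h j i)).
Proof.
  move=> Hinv i j Hi Hj.
  have HH : mx k.+1 h *m mx k.+1 hinv = 1%:M.
    apply/matrixP => a b. rewrite -mx_mmul !mxE Hinv; try by apply/ltP.
    rewrite /delta. case: (Nat.eqb_spec a b) => E.
    - by have -> : a == b by apply/eqP/val_inj.
    - by have -> : (a == b) = false by apply/negbTE/eqP => E2; apply: E; rewrite E2.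
  have Ei : (i < k.+1)%N by apply/ltP. have Ej : (j < k.+1)%N by apply/ltP.
  have A1 : \adj (mx k.+1 h) = \det (mx k.+1 h) *: mx k.+1 hinv.
    by rewrite -[\adj _]mulmx1 -HH mulmxA mul_adj_mx mul_scalar_mx.
  have := congr1 (fun M : 'M[R]_k.+1 => M (inord i) (inord j)) A1.
  rewrite !mxE /cofactor det_mx !inordK // => E.
  change (Rmult (det k.+1 h) (hinv i j)) with (det k.+1 h * hinv i j).
  rewrite -E Nat.add_comm pow_exprn. congr (_ * _).
  rewrite -det_mx. congr (\det _). apply/matrixP => a b. rewrite !mxE /submatrix /=.
  by rewrite !bump_ltb !inordK.
Qed.

Lemma det_posdef_neq0 n h :
  (forall x : nat -> R, (exists i, (i < n)%coq_nat /\ x i <> 0) ->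
       Rgt (rsum n (fun i => rsum n (fun j => Rmult (Rmult (x i) (h i j)) (x j)))) 0) ->
  det n h <> 0.
Proof.
  move=> Hpos. rewrite -det_mx => /eqP /det0P [v vn0 vh].
  have [j0 Hj0] : exists j0 : 'I_n, v ord0 j0 != 0.
    apply/existsP. move: vn0. apply: contraR => /existsPn H. apply/eqP/matrixP => a b.
    rewrite (ord1 a) mxE. by move: (H b) => /negPn/eqP.
  pose x (i : nat) : R := if (i < n)%N then v ord0 (insubd j0 i) else 0.
  have Hins : forall a : 'I_n, insubd j0 (nat_of_ord a) = a
    by move=> a; apply/val_inj; rewrite val_insubd ltn_ord.
  have Hx : exists i, (i < n)%coq_nat /\ x i <> 0.
    exists j0. split; first by apply/ltP. rewrite /x ltn_ord Hins. exact/eqP.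
  have := Hpos x Hx. rewrite rsum_comm.
  have -> : rsum n (fun j => rsum n (fun i => Rmult (Rmult (x i) (h i j)) (x j))) = 0.
    rewrite rsum_big big1 // => j _.
    rewrite rsum_scal_r.
    have -> : rsum n (fun i => Rmult (x i) (h i j)) = (v *m mx n h) ord0 j.
      rewrite mxE rsum_big. apply: eq_bigr => i _. by rewrite /x ltn_ord Hins !mxE.
    rewrite vh mxE. exact: Rmult_0_l.
  move=> H0; exact: (Rgt_irrefl 0 H0).
Qed.

End MathCompBridge.

Definition qform n (P : mat) (x : nat -> R) :=
  rsum n (fun i => rsum n (fun j => x i * P i j * x j)).

Lemma qform_ext n P x y : (forall i, (i < n)%nat -> x i = y i) -> qform n P x = qform n P y.
Proof. intros H. unfold qform. do 2 (apply rsum_ext; intros). rewrite !H; auto. Qed.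

Lemma qform_S n P x : (forall i, (i < n)%nat -> P i n = P n i) ->
  qform (S n) P x = qform n P x + 2 * x n * rsum n (fun j => P n j * x j) + x n * x n * P n n.
Proof.
  intros Hs. unfold qform. simpl rsum. rewrite rsum_plus.
  assert (E1 : rsum n (fun i => x i * P i n * x n) = x n * rsum n (fun j => P n j * x j)).
  { rewrite <- rsum_scal_l. apply rsum_ext; intros. rewrite Hs; auto. ring. }
  assert (E2 : rsum n (fun j => x n * P n j * x j) = x n * rsum n (fun j => P n j * x j)).
  { rewrite <- rsum_scal_l. apply rsum_ext; intros. ring. }
  rewrite E1, E2. ring.
Qed.

(* Cholesky: split off the last coordinate; the Schur complement is again positive definite. *)
Lemma gram_of_posdef n : forall P : mat, sym_posdef n P ->
  exists V : mat, forall i j, (i < n)%nat -> (j < n)%nat -> P i j = rsum n (fun r => V r i * V r j).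
Proof.
  induction n as [|n IH]; intros P [Hs Hp]; [exists (fun _ _ => 0); intros; lia|].
  assert (Hs' : forall i, (i < n)%nat -> P i n = P n i) by (intros; apply Hs; lia).
  set (a := P n n).
  assert (Ha : 0 < a).
  { assert (H : qform (S n) P (fun i => delta i n) > 0).
    { apply Hp. exists n. rewrite delta_refl. split; [lia | lra]. }
    rewrite qform_S, (qform_ext n P _ (fun _ => 0)), rsum_eq0, delta_refl in H
      by (auto; intros; rewrite delta_neq by lia; ring).
    unfold qform in H. rewrite rsum_eq0 in H by (intros; apply rsum_eq0; intros; ring).
    fold a in H. lra. }
  set (P' := fun i j => P i j - P i n * P j n / a).
  destruct (IH P') as [V' HV'].
  { split.
    - intros i j Hi Hj. unfold P'. rewrite (Hs i j) by lia. field. lra.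
    - intros x [i0 [Hi0 Hx0]].
      set (px := rsum n (fun j => P n j * x j)).
      set (y := fun i => if Nat.eqb i n then - px / a else x i).
      assert (Hy : forall i, (i < n)%nat -> y i = x i)
        by (intros i Hi; unfold y; destruct (Nat.eqb_spec i n); [lia|auto]).
      assert (H : qform (S n) P y > 0).
      { apply Hp. exists i0. rewrite Hy by auto. split; [lia | auto]. }
      rewrite qform_S, (qform_ext n P y x), (rsum_ext n _ (fun j => P n j * x j)) in H
        by (auto; intros; rewrite Hy; auto).
      fold px in H. unfold y in H. rewrite Nat.eqb_refl in H. fold a in H.
      change (qform n P' x > 0).
      replace (qform n P' x) with (qform n P x - px * px / a).
      { replace (qform n P x - px * px / a)
          with (qform n P x + 2 * (- px / a) * px + - px / a * (- px / a) * a) by (field; lra).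
        exact H. }
      unfold qform, P'.
      assert (E1 : rsum n (fun i => x i * P i n) = px)
        by (apply rsum_ext; intros; rewrite Hs'; auto; ring).
      assert (E2 : rsum n (fun j => P j n * x j) = px)
        by (apply rsum_ext; intros; rewrite Hs'; auto).
      rewrite <- E1 at 1. rewrite <- E2.
      rewrite rsum_mult. unfold Rdiv. rewrite Rmult_comm, rsum2_scal_l. unfold Rminus.
      rewrite <- rsum_opp, <- rsum_plus. apply rsum_ext; intros.
      rewrite <- rsum_opp, <- rsum_plus. apply rsum_ext; intros. unfold a. ring. }
  exists (fun r i => if Nat.ltb r n then (if Nat.ltb i n then V' r i else 0) else P i n / sqrt a).
  intros i j Hi Hj. simpl rsum. rewrite Nat.ltb_irrefl.
  rewrite (rsum_ext n _ (fun r => (if Nat.ltb i n then V' r i else 0) * (if Nat.ltb j n then V' r j else 0)))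
    by (intros r Hr; apply Nat.ltb_lt in Hr; rewrite Hr; reflexivity).
  assert (Hsq : sqrt a * sqrt a = a) by (apply sqrt_sqrt; lra).
  assert (Hsa : 0 < sqrt a) by (apply sqrt_lt_R0; auto).
  replace (P i n / sqrt a * (P j n / sqrt a)) with (P i n * P j n / a)
    by (rewrite <- Hsq at 1; field; lra).
  destruct (Nat.ltb_spec i n); destruct (Nat.ltb_spec j n).
  - rewrite <- HV' by auto. unfold P'. field. lra.
  - assert (j = n) by lia. subst j. rewrite rsum_eq0 by (intros; ring).
    rewrite (Hs i n) by lia. fold a. field. lra.
  - assert (i = n) by lia. subst i. rewrite rsum_eq0 by (intros; ring). rewrite (Hs n j) by lia. fold a. field. lra.
  - assert (i = n) by lia. assert (j = n) by lia. subst. rewrite rsum_eq0 by (intros; ring). fold a. field. lra.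
Qed.

(* With P = V^T V, tr (P M P M) = sum_(r,s) (V M V^T)_(r,s)^2. *)
Lemma mtr_sq_sandwich_nonneg n P M : sym_posdef n P ->
  msym n M -> 0 <= mtr n (mmul n (mmul n P M) (mmul n P M)).
Proof.
  intros HP HM. destruct (gram_of_posdef n P HP) as [V HV].
  set (W := fun r k => rsum n (fun j => V r j * M j k)).
  assert (E1 : forall i k, (i < n)%nat -> (k < n)%nat ->
     mmul n P M i k = rsum n (fun r => V r i * W r k)).
  { intros i k Hi Hk. unfold mmul, W.
    rewrite (rsum_ext n _ (fun j => rsum n (fun r => V r i * V r j * M j k)))
      by (intros j Hj; rewrite HV, <- rsum_scal_r by auto; reflexivity).
    rewrite rsum_comm. apply rsum_ext; intros. rewrite <- rsum_scal_l. apply rsum_ext; intros. ring. }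
  assert (EW : forall r s, rsum n (fun k => V s k * W r k) = rsum n (fun i => V r i * W s i)).
  { intros r s. unfold W.
    rewrite (rsum_ext n _ (fun k => rsum n (fun j => V s k * V r j * M j k)))
      by (intros; rewrite <- rsum_scal_l; apply rsum_ext; intros; ring).
    rewrite rsum_comm. apply rsum_ext; intros i Hi. rewrite <- rsum_scal_l.
    apply rsum_ext; intros j Hj. rewrite HM by auto. ring. }
  unfold mtr, mmul at 1.
  rewrite (rsum_ext n _ (fun i => rsum n (fun k => rsum n (fun r => rsum n (fun s =>
     V r i * W r k * (V s k * W s i))))))
    by (intros i Hi; apply rsum_ext; intros k Hk; rewrite !E1 by auto; apply rsum_mult).
  rewrite rsum4_rot, rsum4_rot.
  apply rsum_nonneg; intros r Hr; apply rsum_nonneg; intros s Hs.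
  rewrite (rsum_ext n _ (fun i => rsum n (fun k => (V r i * W s i) * (V s k * W r k))))
    by (intros; apply rsum_ext; intros; ring).
  rewrite <- rsum_mult, EW. apply Rle_0_sqr.
Qed.

Lemma mtr_ext n A B : (forall i, (i < n)%nat -> A i i = B i i) -> mtr n A = mtr n B.
Proof. apply rsum_ext. Qed.

Lemma mtr_mmul_cycle n X Y Z :
  mtr n (mmul n (mmul n X Y) Z) = mtr n (mmul n (mmul n Y Z) X).
Proof.
  transitivity (mtr n (mmul n Z (mmul n X Y))); [apply mtr_mmul_comm|].
  transitivity (mtr n (mmul n (mmul n Z X) Y)); [apply mtr_ext; intros; apply mmul_assoc|].
  transitivity (mtr n (mmul n Y (mmul n Z X))); [apply mtr_mmul_comm|].
  apply mtr_ext; intros; apply mmul_assoc.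
Qed.

Section BracketForms.
Variables (n : nat) (c : nat -> nat -> nat -> R) (P : mat).

Definition column (M : mat) a : nat -> R := fun u => M u a.

Definition bracket_eval x y (al : nat -> R) := rsum n (fun u => c x y u * al u).

Definition bracket_pairing (al be : nat -> R) :=
  rsum n (fun x => rsum n (fun x' => rsum n (fun y => rsum n (fun y' =>
     P x x' * P y y' * bracket_eval x y al * bracket_eval x' y' be)))).

Definition bracket_gram (M : mat) :=
  rsum n (fun x => rsum n (fun x' => rsum n (fun y => rsum n (fun y' =>
     P x x' * P y y' * rsum n (fun u => rsum n (fun v => c x y u * c x' y' v * M u v)))))).

Lemma bracket_eval_ext x y al be :
  (forall u, (u < n)%nat -> al u = be u) -> bracket_eval x y al = bracket_eval x y be.
Proof. intros H. unfold bracket_eval. apply rsum_ext; intros. rewrite H; auto. Qed.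

Lemma bracket_eval_lincomb x y (w : nat -> R) (A : nat -> nat -> R) :
  bracket_eval x y (fun u => rsum n (fun e => w e * A e u))
  = rsum n (fun e => w e * bracket_eval x y (A e)).
Proof.
  unfold bracket_eval.
  transitivity (rsum n (fun u => rsum n (fun e => c x y u * (w e * A e u)))).
  - apply rsum_ext; intros; rewrite rsum_scal_l; ring.
  - rewrite rsum_comm. apply rsum_ext; intros. rewrite <- rsum_scal_l. apply rsum_ext; intros; ring.
Qed.

Lemma bracket_pairing_ext al al' be be' :
  (forall u, (u < n)%nat -> al u = al' u) -> (forall u, (u < n)%nat -> be u = be' u) ->
  bracket_pairing al be = bracket_pairing al' be'.
Proof.
  intros H1 H2. unfold bracket_pairing. do 4 (apply rsum_ext; intros).
  rewrite (bracket_eval_ext _ _ al al'), (bracket_eval_ext _ _ be be'); auto.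
Qed.

Lemma bracket_pairing_lincomb_l (w : nat -> R) (A : nat -> nat -> R) be :
  rsum n (fun e => w e * bracket_pairing (A e) be)
  = bracket_pairing (fun u => rsum n (fun e => w e * A e u)) be.
Proof.
  unfold bracket_pairing. symmetry.
  transitivity (rsum n (fun x => rsum n (fun x' => rsum n (fun y => rsum n (fun y' => rsum n (fun e =>
     w e * (P x x' * P y y' * bracket_eval x y (A e) * bracket_eval x' y' be))))))).
  - do 4 (apply rsum_ext; intros). rewrite bracket_eval_lincomb, rsum_scal_lr.
    apply rsum_ext; intros; ring.
  - rewrite rsum5_rot. apply rsum_ext; intros. symmetry. apply rsum4_scal_l.
Qed.

Lemma bracket_pairing_lincomb_r al (w : nat -> R) (B : nat -> nat -> R) :
  rsum n (fun e => w e * bracket_pairing al (B e))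
  = bracket_pairing al (fun u => rsum n (fun e => w e * B e u)).
Proof.
  unfold bracket_pairing. symmetry.
  transitivity (rsum n (fun x => rsum n (fun x' => rsum n (fun y => rsum n (fun y' => rsum n (fun e =>
     w e * (P x x' * P y y' * bracket_eval x y al * bracket_eval x' y' (B e)))))))).
  - do 4 (apply rsum_ext; intros). rewrite bracket_eval_lincomb, <- rsum_scal_l.
    apply rsum_ext; intros; ring.
  - rewrite rsum5_rot. apply rsum_ext; intros. symmetry. apply rsum4_scal_l.
Qed.

Lemma bracket_gram_ext M M' : (forall u v, (u < n)%nat -> (v < n)%nat -> M u v = M' u v) ->
  bracket_gram M = bracket_gram M'.
Proof.
  intros HM. unfold bracket_gram. do 4 (apply rsum_ext; intros). f_equal.
  do 2 (apply rsum_ext; intros). rewrite HM; auto.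
Qed.

Lemma bracket_pairing_delta_sum (M : mat) :
  rsum n (fun i => bracket_pairing (fun u => delta u i) (column M i)) = bracket_gram (fun u v => M v u).
Proof.
  transitivity (rsum n (fun i => rsum n (fun x => rsum n (fun x' => rsum n (fun y => rsum n (fun y' =>
     P x x' * P y y' * (c x y i * bracket_eval x' y' (column M i)))))))).
  { apply rsum_ext; intros i Hi. unfold bracket_pairing. do 4 (apply rsum_ext; intros).
    unfold bracket_eval at 1. rewrite (rsum_delta_r n i (fun u => c _ _ u)); auto. ring. }
  rewrite <- rsum5_rot. unfold bracket_gram. do 4 (apply rsum_ext; intros).
  rewrite <- rsum_scal_l. apply rsum_ext; intros u Hu.
  f_equal. f_equal. unfold bracket_eval, column. rewrite <- rsum_scal_l. apply rsum_ext; intros; ring.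
Qed.

End BracketForms.

(* [ad_pairing P1 P2 h] is the trace against [P1] of the double sum in the first term of
   [ricci_form _ _ _ h P2]. *)
Definition ad_pairing n c (P1 P2 M : mat) :=
  rsum n (fun a => rsum n (fun b => P1 a b *
   rsum n (fun i => rsum n (fun j => P2 i j *
     rsum n (fun k => rsum n (fun l => c b i k * c a j l * M k l)))))).

Lemma ad_pairing_scal_l n c k X P2 M :
  ad_pairing n c (fun a b => k * X a b) P2 M = k * ad_pairing n c X P2 M.
Proof.
  unfold ad_pairing. rewrite <- rsum_scal_l. apply rsum_ext; intros.
  rewrite <- rsum_scal_l. apply rsum_ext; intros. ring.
Qed.

Lemma ad_pairing_scal_r n c k P1 P2 M :
  ad_pairing n c P1 P2 (fun a b => k * M a b) = k * ad_pairing n c P1 P2 M.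
Proof.
  unfold ad_pairing. rewrite rsum2_scal_l. do 2 (apply rsum_ext; intros).
  rewrite <- Rmult_assoc, (Rmult_comm k), Rmult_assoc. f_equal.
  rewrite rsum2_scal_l. do 2 (apply rsum_ext; intros).
  rewrite <- Rmult_assoc, (Rmult_comm k), Rmult_assoc. f_equal.
  rewrite rsum2_scal_l. do 2 (apply rsum_ext; intros). ring.
Qed.

Lemma D_ad_pairing n c (P1 P2 M : R -> mat) P1' P2' M' t :
  (forall a b, (a < n)%nat -> (b < n)%nat -> derivable_pt_lim (fun s => P1 s a b) t (P1' a b)) ->
  (forall a b, (a < n)%nat -> (b < n)%nat -> derivable_pt_lim (fun s => P2 s a b) t (P2' a b)) ->
  (forall a b, (a < n)%nat -> (b < n)%nat -> derivable_pt_lim (fun s => M s a b) t (M' a b)) ->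
  derivable_pt_lim (fun s => ad_pairing n c (P1 s) (P2 s) (M s)) t
     (ad_pairing n c P1' (P2 t) (M t) + ad_pairing n c (P1 t) P2' (M t)
      + ad_pairing n c (P1 t) (P2 t) M').
Proof.
  intros H1 H2 H3. unfold ad_pairing. eapply D_eq.
  { apply D_rsum; intros a Ha. apply D_rsum; intros b Hb.
    apply (D_mult (fun s => P1 s a b)); [apply H1; auto|].
    apply D_rsum; intros i Hi. apply D_rsum; intros j Hj.
    apply (D_mult (fun s => P2 s i j)); [apply H2; auto|].
    apply D_rsum; intros k Hk. apply D_rsum; intros l Hl.
    apply D_scal. apply H3; auto. }
  rewrite rsum2_plus, Rplus_assoc. f_equal. rewrite <- rsum2_plus.
  do 2 (apply rsum_ext; intros). rewrite rsum2_plus. ring.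
Qed.

Lemma mtr_mmul_lincomb n X x y z A B C :
  mtr n (mmul n X (fun a b => x * A a b + y * B a b + z * C a b))
  = x * mtr n (mmul n X A) + y * mtr n (mmul n X B) + z * mtr n (mmul n X C).
Proof.
  unfold mtr, mmul. rewrite <- !rsum_scal_l, <- !rsum_plus. apply rsum_ext; intros.
  rewrite <- !rsum_scal_l, <- !rsum_plus. apply rsum_ext; intros. ring.
Qed.

Definition killing_mat n m c : mat := fun a b => killing (n + m) c a b.

Section RicciTerms.
Variables (n : nat) (c : nat -> nat -> nat -> R) (P H : mat).
Hypothesis Psym : msym n P.
Hypothesis Hsym : msym n H.
Hypothesis PH : is_inverse n P H.
Hypothesis c_anti : forall x y z, (x < n)%nat -> (y < n)%nat -> (z < n)%nat -> c x y z = - c y x z.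

Definition ricci_ad_term a b :=
  rsum n (fun i => rsum n (fun j => P i j * rsum n (fun k => rsum n (fun l => c a i k * c b j l * H k l)))).

Definition ricci_bracket_term a b := bracket_pairing n c P (column H a) (column H b).

Lemma ricci_form_terms m a b :
  ricci_form n m c H P a b
  = - / 2 * ricci_ad_term a b - / 2 * killing (n + m) c a b + / 4 * ricci_bracket_term a b.
Proof. reflexivity. Qed.

Lemma mtr_mmul_ricci_form m X :
  mtr n (mmul n X (ricci_form n m c H P))
  = - / 2 * ad_pairing n c X P H - / 2 * mtr n (mmul n X (killing_mat n m c))
    + / 4 * mtr n (mmul n X ricci_bracket_term).
Proof.
  change (ad_pairing n c X P H) with (mtr n (mmul n X ricci_ad_term)).
  set (T1 := mtr n (mmul n X ricci_ad_term)).
  set (T2 := mtr n (mmul n X (killing_mat n m c))).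
  set (T3 := mtr n (mmul n X ricci_bracket_term)).
  transitivity (- / 2 * T1 + - / 2 * T2 + / 4 * T3); [|ring].
  unfold T1, T2, T3. rewrite <- mtr_mmul_lincomb. apply mtr_ext; intros. apply mmul_ext; [reflexivity|].
  intros. rewrite ricci_form_terms. unfold killing_mat.
  set (A1 := ricci_ad_term _ _). set (A3 := ricci_bracket_term _ _). ring.
Qed.

Lemma ad_pairing_diag M : ad_pairing n c P P M = bracket_gram n c P M.
Proof.
  unfold ad_pairing, bracket_gram. rewrite rsum_comm. do 2 (apply rsum_ext; intros).
  rewrite Psym by auto. rewrite rsum2_scal_l. do 2 (apply rsum_ext; intros). ring.
Qed.

Lemma mmul_ricci_bracket_term i k : (i < n)%nat ->
  mmul n P ricci_bracket_term i k = bracket_pairing n c P (fun u => delta u i) (column H k).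
Proof.
  intros Hi. unfold mmul, ricci_bracket_term.
  rewrite (bracket_pairing_lincomb_l n c P (fun e => P i e) (fun e => column H e)).
  apply bracket_pairing_ext; auto. intros u Hu. unfold column.
  rewrite delta_sym, <- PH by auto. apply rsum_ext; intros. rewrite (Hsym u); auto.
Qed.

Lemma mtr_ricci_bracket_term_mmul Lm :
  msym n (mmul n H Lm) ->
  mtr n (mmul n (mmul n P ricci_bracket_term) Lm) = bracket_gram n c P (mmul n H Lm).
Proof.
  intros HL. unfold mtr at 1, mmul at 1.
  transitivity (rsum n (fun i => bracket_pairing n c P (fun u => delta u i) (column (mmul n H Lm) i))).
  - apply rsum_ext; intros i Hi.
    rewrite (rsum_ext n _ (fun k => Lm k i * bracket_pairing n c P (fun u => delta u i) (column H k)))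
      by (intros; rewrite mmul_ricci_bracket_term by auto; ring).
    rewrite (bracket_pairing_lincomb_r n c P _ (fun k => Lm k i) (fun k => column H k)).
    apply bracket_pairing_ext; auto. intros u Hu. unfold column, mmul. apply rsum_ext; intros; ring.
  - rewrite bracket_pairing_delta_sum. apply bracket_gram_ext. intros; apply HL; auto.
Qed.

Lemma mtr_ricci_bracket_term : mtr n (mmul n P ricci_bracket_term) = bracket_gram n c P H.
Proof.
  rewrite (mtr_ext n _ (mmul n (mmul n P ricci_bracket_term) delta)) by (intros; symmetry; apply mmul_delta_r; auto).
  rewrite mtr_ricci_bracket_term_mmul.
  - apply bracket_gram_ext. intros. apply mmul_delta_r; auto.
  - intros a b Ha Hb. rewrite !mmul_delta_r by auto. apply Hsym; auto.
Qed.

Lemma ad_pairing_swap P1 P2 M : msym n M ->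
  ad_pairing n c P1 P2 M = ad_pairing n c P2 P1 M.
Proof.
  intros HM. unfold ad_pairing.
  transitivity (rsum n (fun a => rsum n (fun b => rsum n (fun i => rsum n (fun j =>
     P1 a b * P2 i j * rsum n (fun k => rsum n (fun l => c b i k * c a j l * M k l))))))).
  { do 2 (apply rsum_ext; intros). rewrite rsum2_scal_l. do 2 (apply rsum_ext; intros). ring. }
  rewrite rsum4_rot, rsum4_rot.
  apply rsum_ext; intros a Ha; apply rsum_ext; intros b Hb.
  rewrite rsum2_scal_l. apply rsum_ext; intros i Hi; apply rsum_ext; intros j Hj.
  assert (E : rsum n (fun k => rsum n (fun l => c j a k * c i b l * M k l))
            = rsum n (fun k => rsum n (fun l => c b i k * c a j l * M k l))).
  { rewrite rsum_comm. do 2 (apply rsum_ext; intros).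
    rewrite (c_anti j a), (c_anti i b), HM by auto. ring. }
  rewrite E. ring.
Qed.

Lemma scal_decomposition m :
  scal n m c H P = - / 4 * ad_pairing n c P P H - / 2 * mtr n (mmul n P (killing_mat n m c)).
Proof.
  unfold scal, ricci_endo. rewrite mtr_mmul_ricci_form, mtr_ricci_bracket_term, <- ad_pairing_diag.
  set (W := ad_pairing n c P P H). field.
Qed.

Lemma mtr_ricci_endo_mmul m Lm :
  msym n (mmul n H Lm) ->
  mtr n (mmul n (ricci_endo n m c H P) Lm)
  = - / 2 * ad_pairing n c (mmul n Lm P) P H - / 2 * mtr n (mmul n (mmul n Lm P) (killing_mat n m c))
    + / 4 * bracket_gram n c P (mmul n H Lm).
Proof.
  intros HL. unfold ricci_endo. rewrite mtr_mmul_cycle, mtr_mmul_cycle, mtr_mmul_ricci_form.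
  rewrite (mtr_mmul_cycle n Lm P ricci_bracket_term), mtr_ricci_bracket_term_mmul by exact HL.
  reflexivity.
Qed.

End RicciTerms.

Lemma sumsq_pos n (x : nat -> R) :
  (exists i, (i < n)%nat /\ x i <> 0) -> rsum n (fun i => x i * x i) > 0.
Proof.
  induction n; intros [i [Hi Hx]]; [lia|]. simpl.
  assert (H0 : 0 <= rsum n (fun i => x i * x i)) by (apply rsum_nonneg; intros; nra).
  destruct (Nat.eq_dec i n) as [->|Hne].
  - assert (0 < x n * x n) by (apply Rsqr_pos_lt; exact Hx). lra.
  - assert (rsum n (fun i => x i * x i) > 0) by (apply IHn; exists i; split; [lia|auto]).
    assert (0 <= x n * x n) by nra. lra.
Qed.

(* The segment from the identity to [h] stays in the positive definite matrices, where [det]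
   does not vanish; by the intermediate value theorem it keeps the sign of [det delta = 1]. *)
Lemma det_posdef_pos n h : sym_posdef n h -> 0 < det n h.
Proof.
  intros [Hsym Hpos].
  set (p := fun s => det n (fun i j => (1 - s) * delta i j + s * h i j)).
  assert (Hne : forall s, 0 <= s <= 1 -> p s <> 0).
  { intros s Hs. apply MathCompBridge.det_posdef_neq0. intros x Hx.
    assert (E : rsum n (fun i => rsum n (fun j => x i * ((1 - s) * delta i j + s * h i j) * x j))
       = (1 - s) * rsum n (fun i => x i * x i) + s * qform n h x).
    { unfold qform. rewrite <- !rsum_scal_l, <- rsum_plus. apply rsum_ext; intros i Hi.
      transitivity (rsum n (fun j => (1 - s) * x i * (delta i j * x j)) + rsum n (fun j => s * (x i * h i j * x j))).
      - rewrite <- rsum_plus. apply rsum_ext; intros; ring.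
      - rewrite rsum_scal_l, rsum_delta_l, rsum_scal_l; auto. ring. }
    rewrite E. assert (H1 := sumsq_pos n x Hx). assert (H2 := Hpos x Hx). fold (qform n h x) in H2.
    destruct (Req_dec s 0) as [->|]; [lra | nra]. }
  assert (Hc : continuity p).
  { intros s. destruct (det_derivable n (fun s i j => (1 - s) * delta i j + s * h i j) s) as [l Hl].
    - intros i j _ _. eexists.
      apply D_plus; apply (D_mult (fun s => _) (fun _ => _)).
      + apply D_minus; [apply D_const | apply derivable_pt_lim_id].
      + apply D_const.
      + apply derivable_pt_lim_id.
      + apply D_const.
    - apply derivable_continuous_pt. exists l. exact Hl. }
  assert (P0 : p 0 = 1)
    by (unfold p; rewrite (det_ext n _ delta); [apply det_delta | intros; ring]).
  assert (P1 : p 1 = det n h) by (unfold p; apply det_ext; intros; ring).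
  destruct (Rlt_or_le 0 (p 1)) as [|H]; [lra|].
  exfalso. destruct (IVT (fun s => - p s) 0 1) as [z [Hz Hz0]]; try lra.
  - intros s. apply continuity_pt_opp, Hc.
  - assert (p 1 <> 0) by (apply Hne; lra). lra.
  - apply (Hne z Hz). lra.
Qed.

Lemma inverse_sym n h hinv : msym n h -> is_inverse n h hinv -> msym n hinv.
Proof.
  intros Hs Hinv i j Hi Hj.
  set (T := fun a b => hinv b a).
  assert (HT : is_inverse n T h).
  { intros a b Ha Hb. rewrite delta_sym, <- (Hinv b a Hb Ha).
    unfold mmul, T. apply rsum_ext. intros k Hk. rewrite (Hs b k); auto. ring. }
  change (hinv i j = T i j).
  rewrite <- (mmul_delta_r n T i j Hj), (mmul_ext n T T delta (mmul n h hinv) i j); auto.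
  - rewrite mmul_assoc, (mmul_ext n (mmul n T h) delta hinv hinv i j); auto.
    rewrite mmul_delta_l; auto.
  - intros k Hk. rewrite Hinv; auto.
Qed.

Lemma inverse_posdef n h hinv : sym_posdef n h -> is_inverse n h hinv -> is_inverse n hinv h ->
  sym_posdef n hinv.
Proof.
  intros [Hs Hp] Hinv1 Hinv2. split; [exact (inverse_sym n h hinv Hs Hinv1)|].
  intros x [i0 [Hi0 Hx0]].
  set (y := fun a => rsum n (fun i => x i * hinv i a)).
  assert (Hx : forall j, (j < n)%nat -> x j = rsum n (fun a => y a * h a j)).
  { intros j Hj. unfold y.
    rewrite (rsum_ext n _ (fun a => rsum n (fun i => x i * hinv i a * h a j)))
      by (intros; symmetry; apply rsum_scal_r).
    rewrite rsum_comm, <- (rsum_delta_r n j x Hj). apply rsum_ext; intros i Hi.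
    rewrite <- (Hinv2 i j) by auto. unfold mmul. rewrite <- rsum_scal_l.
    apply rsum_ext; intros. ring. }
  assert (Hy : exists a, (a < n)%nat /\ y a <> 0).
  { apply NNPP. intros Hy. apply Hx0. rewrite Hx by auto. apply rsum_eq0. intros a Ha.
    destruct (Req_dec (y a) 0) as [->|Hya]; [ring|]. exfalso. apply Hy. exists a. auto. }
  assert (H := Hp y Hy).
  replace (rsum n (fun i => rsum n (fun j => x i * hinv i j * x j)))
    with (rsum n (fun a => rsum n (fun b => y a * h a b * y b))); [exact H|].
  transitivity (rsum n (fun a => y a * x a)).
  - apply rsum_ext; intros a Ha. rewrite (Hx a Ha), <- rsum_scal_l.
    apply rsum_ext; intros b Hb. rewrite (Hs b a) by auto. ring.
  - unfold y. rewrite (rsum_ext n _ (fun a => rsum n (fun i => x i * hinv i a * x a)))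
      by (intros; symmetry; apply rsum_scal_r).
    rewrite rsum_comm. reflexivity.
Qed.

Lemma mtr_sq_selfadjoint_nonneg n h hinv A :
  sym_posdef n h -> is_inverse n h hinv -> is_inverse n hinv h -> msym n (mmul n h A) ->
  0 <= mtr n (mmul n A A).
Proof.
  intros Hpd Hinv1 Hinv2 HA.
  assert (E : forall i k, (i < n)%nat -> (k < n)%nat -> A i k = mmul n hinv (mmul n h A) i k).
  { intros i k Hi Hk. rewrite mmul_assoc, (mmul_ext n _ delta A A) by auto.
    symmetry. apply mmul_delta_l; auto. }
  rewrite (mtr_ext n _ (mmul n (mmul n hinv (mmul n h A)) (mmul n hinv (mmul n h A))))
    by (intros; apply mmul_ext; intros; apply E; auto).
  apply mtr_sq_sandwich_nonneg; [apply (inverse_posdef n h) | ]; auto.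
Qed.

Lemma mmul_tracefree_sym n h A : msym n h -> msym n (mmul n h A) -> msym n (mmul n h (tracefree n A)).
Proof.
  intros Hh HA.
  assert (E : forall a b, (a < n)%nat -> (b < n)%nat ->
      mmul n h (tracefree n A) a b = mmul n h A a b - mtr n A / INR n * h a b).
  { intros a b Ha Hb. unfold tracefree, mmul.
    rewrite (rsum_ext n _ (fun k => h a k * A k b + (- (mtr n A / INR n)) * (h a k * delta k b)))
      by (intros; ring).
    rewrite rsum_plus, rsum_scal_l, (rsum_delta_r n b (fun k => h a k)); auto. ring. }
  intros a b Ha Hb. rewrite !E by auto. rewrite HA, Hh by auto. reflexivity.
Qed.

Lemma interval_nbhd t0 t1 t : t0 < t < t1 ->
  exists d, 0 < d /\ forall s, Rabs (s - t) < d -> t0 < s < t1.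
Proof.
  intros Ht. exists (Rmin (t - t0) (t1 - t)). split; [apply Rmin_pos; lra|].
  intros s Hs. assert (H1 := Rmin_l (t - t0) (t1 - t)). assert (H2 := Rmin_r (t - t0) (t1 - t)).
  apply Rabs_def2 in Hs. lra.
Qed.

Lemma D_mult_vanishing f h t b : (exists a, derivable_pt_lim f t a) ->
  derivable_pt_lim h t b -> h t = 0 -> derivable_pt_lim (fun s => f s * h s) t (f t * b).
Proof.
  intros [a Hf] Hh H0. apply (D_eq _ _ _ _ (D_mult f h t a b Hf Hh)). rewrite H0. ring.
Qed.

Lemma D_mtr_mmul_const n (A : R -> mat) A' B t :
  (forall a b, (a < n)%nat -> (b < n)%nat -> derivable_pt_lim (fun s => A s a b) t (A' a b)) ->
  derivable_pt_lim (fun s => mtr n (mmul n (A s) B)) t (mtr n (mmul n A' B)).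
Proof.
  intros HA. apply D_rsum; intros i Hi. apply D_rsum; intros k Hk.
  apply (D_eq _ _ _ _ (D_mult (fun s => A s i k) (fun _ => B k i) t _ _ (HA i k Hi Hk) (D_const _ t))).
  ring.
Qed.

Lemma D_mtr_mmul_self n (A : R -> mat) A' t :
  (forall a b, (a < n)%nat -> (b < n)%nat -> derivable_pt_lim (fun s => A s a b) t (A' a b)) ->
  derivable_pt_lim (fun s => mtr n (mmul n (A s) (A s))) t (2 * mtr n (mmul n (A t) A')).
Proof.
  intros HA. eapply D_eq.
  { apply D_rsum; intros i Hi. apply D_rsum; intros k Hk.
    apply (D_mult (fun s => A s i k) (fun s => A s k i)); apply HA; auto. }
  rewrite rsum2_plus. change (mtr n (mmul n A' (A t)) + mtr n (mmul n (A t) A') = 2 * mtr n (mmul n (A t) A')).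
  rewrite mtr_mmul_comm. ring.
Qed.

Lemma mtr_mmul_scal_l n k A B : mtr n (mmul n (fun a b => k * A a b) B) = k * mtr n (mmul n A B).
Proof.
  unfold mtr, mmul. rewrite <- rsum_scal_l. apply rsum_ext; intros.
  rewrite <- rsum_scal_l. apply rsum_ext; intros. ring.
Qed.

Lemma D_tracefree_sq n (L : R -> mat) Ld t : (n <> 0)%nat ->
  (forall i j, (i < n)%nat -> (j < n)%nat -> derivable_pt_lim (fun s => L s i j) t (Ld i j)) ->
  derivable_pt_lim (fun s => mtr n (mmul n (tracefree n (L s)) (tracefree n (L s)))) t
    (2 * mtr n (mmul n (L t) Ld) - 2 * mtr n (L t) * mtr n Ld / INR n).
Proof.
  intros Hn0 HL. assert (Hn : INR n <> 0) by (apply not_0_INR; lia).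
  apply D_ext with (fun s => mtr n (mmul n (L s) (L s)) - mtr n (L s) * mtr n (L s) * / INR n).
  { intros s. rewrite mtr_tracefree_sq by exact Hn0. unfold Rdiv. ring. }
  assert (HT : derivable_pt_lim (fun s => mtr n (L s)) t (mtr n Ld))
    by (apply D_rsum; intros; apply HL; auto).
  eapply D_eq.
  { apply D_minus; [apply D_mtr_mmul_self, HL|].
    apply (D_mult (fun s => mtr n (L s) * mtr n (L s)) (fun _ => / INR n)); [|apply D_const].
    apply (D_mult (fun s => mtr n (L s)) (fun s => mtr n (L s))); exact HT. }
  field; auto.
Qed.

Section MetricCurve.
Variables (n : nat) (hn : (1 <= n)%nat) (t0 t1 : R) (g ginv L : R -> mat).
Hypothesis hg_pd : forall t, t0 < t < t1 -> sym_posdef n (g t).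
Hypothesis hg_inv1 : forall t, t0 < t < t1 -> is_inverse n (g t) (ginv t).
Hypothesis hg_inv2 : forall t, t0 < t < t1 -> is_inverse n (ginv t) (g t).
Hypothesis hgL : forall t, t0 < t < t1 -> forall i j, (i < n)%nat -> (j < n)%nat ->
  derivable_pt_lim (fun s => g s i j) t (2 * mmul n (g t) (L t) i j).

Lemma g_sym t : t0 < t < t1 -> msym n (g t).
Proof. intros Ht. exact (proj1 (hg_pd t Ht)). Qed.

Lemma ginv_sym t : t0 < t < t1 -> msym n (ginv t).
Proof. intros Ht. exact (inverse_sym n _ _ (g_sym t Ht) (hg_inv1 t Ht)). Qed.

(* [g L] is the derivative of the symmetric matrix [g / 2], hence symmetric. *)
Lemma gL_sym t : t0 < t < t1 -> msym n (mmul n (g t) (L t)).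
Proof.
  intros Ht i j Hi Hj.
  assert (H : derivable_pt_lim (fun s => g s i j) t (2 * mmul n (g t) (L t) j i)).
  { apply D_ext_loc with (fun s => g s j i); [|apply hgL; auto].
    destruct (interval_nbhd t0 t1 t Ht) as [d [Hd Hs]].
    exists d; split; auto. intros s Hs'. apply g_sym; auto. }
  assert (E := uniqueness_limite _ _ _ _ (hgL t Ht i j Hi Hj) H). lra.
Qed.

Lemma D_det_g t : t0 < t < t1 ->
  derivable_pt_lim (fun s => det n (g s)) t (2 * mtr n (L t) * det n (g t)).
Proof.
  intros Ht.
  apply D_ext with (fun s => det n (g t) * det n (mmul n (ginv t) (g s))).
  { intros s. rewrite <- MathCompBridge.det_mmul. apply det_ext. intros i j Hi Hj.
    rewrite mmul_assoc, (mmul_ext n _ delta (g s) (g s)); auto.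
    - apply mmul_delta_l; auto.
    - intros; apply hg_inv1; auto. }
  replace (2 * mtr n (L t) * det n (g t)) with (det n (g t) * mtr n (fun i j => 2 * L t i j))
    by (unfold mtr; rewrite rsum_scal_l; ring).
  apply D_scal, D_det_at_delta; [apply hg_inv2; auto|].
  intros i j Hi Hj. unfold mmul.
  replace (2 * L t i j) with (rsum n (fun k => ginv t i k * (2 * mmul n (g t) (L t) k j))).
  - apply D_rsum. intros k Hk. apply D_scal, hgL; auto.
  - rewrite (rsum_ext n _ (fun k => 2 * (ginv t i k * mmul n (g t) (L t) k j))) by (intros; ring).
    rewrite rsum_scal_l. fold (mmul n (ginv t) (mmul n (g t) (L t)) i j).
    rewrite mmul_assoc, (mmul_ext n _ delta (L t) (L t)); auto.
    + rewrite mmul_delta_l; auto.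
    + intros; apply hg_inv2; auto.
Qed.

Lemma det_g_pos t : t0 < t < t1 -> 0 < det n (g t).
Proof. intros Ht. apply det_posdef_pos, hg_pd, Ht. Qed.

Lemma ginv_derivable t i j : t0 < t < t1 -> (i < n)%nat -> (j < n)%nat ->
  exists l, derivable_pt_lim (fun s => ginv s i j) t l.
Proof.
  intros Ht Hi Hj. destruct (Nat.lt_exists_pred 0 n) as [k [Hk _]]; [lia|].
  destruct (det_derivable k (fun s => submatrix (g s) j i) t) as [l1 H1].
  { intros a b Ha Hb. eexists. unfold submatrix. apply hgL; auto.
    - destruct (Nat.ltb a j); lia.
    - destruct (Nat.ltb b i); lia. }
  eexists. apply D_ext_loc with (fun s => (-1) ^ (i + j) * det k (submatrix (g s) j i) / det (S k) (g s)).
  - destruct (interval_nbhd t0 t1 t Ht) as [d [Hd Hs]]. exists d; split; auto. intros s Hs'.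
    assert (Hs2 := Hs s Hs').
    assert (Hinv : is_inverse (S k) (g s) (ginv s)) by (rewrite <- Hk; apply hg_inv1, Hs2).
    rewrite Hk in Hi, Hj.
    rewrite <- (MathCompBridge.det_mul_inverse k (g s) (ginv s) Hinv i j Hi Hj), <- Hk.
    field. apply Rgt_not_eq, det_g_pos, Hs2.
  - rewrite <- Hk. apply D_div; [apply D_scal, H1 | apply D_det_g, Ht | apply Rgt_not_eq, det_g_pos, Ht].
Qed.

Lemma ginv_difference t s i j : t0 < t < t1 -> t0 < s < t1 -> (i < n)%nat -> (j < n)%nat ->
  ginv s i j
  = ginv t i j - rsum n (fun k => ginv s i k * rsum n (fun l => (g s k l - g t k l) * ginv t l j)).
Proof.
  intros Ht Hs Hi Hj.
  rewrite (rsum_ext n _ (fun k => ginv s i k * mmul n (g s) (ginv t) k j - ginv s i k * delta k j)).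
  2:{ intros k Hk. rewrite <- (hg_inv1 t Ht k j) by auto. unfold mmul.
      rewrite <- Rmult_minus_distr_l, <- rsum_minus. f_equal. apply rsum_ext; intros; ring. }
  rewrite rsum_minus, rsum_delta_r by auto.
  fold (mmul n (ginv s) (mmul n (g s) (ginv t)) i j).
  rewrite mmul_assoc, (mmul_ext n _ delta (ginv t) (ginv t)), mmul_delta_l; auto.
  - ring.
  - intros; apply hg_inv2; auto.
Qed.

(* The factor [g s - g t] vanishes at [s = t], so the unknown derivative of [ginv] drops out. *)
Lemma D_ginv t i j : t0 < t < t1 -> (i < n)%nat -> (j < n)%nat ->
  derivable_pt_lim (fun s => ginv s i j) t (- 2 * mmul n (L t) (ginv t) i j).
Proof.
  intros Ht Hi Hj.
  apply D_ext_loc with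
    (fun s => ginv t i j - rsum n (fun k => ginv s i k * rsum n (fun l => (g s k l - g t k l) * ginv t l j))).
  { destruct (interval_nbhd t0 t1 t Ht) as [d [Hd Hs]]. exists d; split; auto.
    intros s Hs'. symmetry. apply ginv_difference; auto. }
  eapply D_eq.
  { apply D_minus; [apply D_const|]. apply D_rsum; intros k Hk.
    apply D_mult_vanishing; [apply ginv_derivable; auto| |].
    - apply D_rsum; intros l Hl. apply (D_mult (fun s => g s k l - g t k l) (fun _ => ginv t l j)).
      + apply D_minus; [apply hgL; auto | apply D_const].
      + apply D_const.
    - apply rsum_eq0. intros; ring. }
  rewrite (rsum_ext n _ (fun k => 2 * (ginv t i k * mmul n (mmul n (g t) (L t)) (ginv t) k j))).
  2:{ intros k Hk. transitivity (ginv t i k * (2 * mmul n (mmul n (g t) (L t)) (ginv t) k j)); [|ring].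
      f_equal. change (mmul n (mmul n (g t) (L t)) (ginv t) k j)
        with (rsum n (fun l => mmul n (g t) (L t) k l * ginv t l j)).
      rewrite <- rsum_scal_l. apply rsum_ext; intros; ring. }
  rewrite rsum_scal_l. fold (mmul n (ginv t) (mmul n (mmul n (g t) (L t)) (ginv t)) i j).
  rewrite mmul_assoc, (mmul_ext n _ (L t) (ginv t) (ginv t)); [ring | | reflexivity].
  intros k Hk. rewrite mmul_assoc, (mmul_ext n _ delta (L t) (L t)); auto.
  - apply mmul_delta_l; auto.
  - intros; apply hg_inv2; auto.
Qed.

Lemma D_volume_power t : t0 < t < t1 ->
  derivable_pt_lim (fun s => Rpower (sqrt (det n (g s))) (2 / INR n)) t
    (2 / INR n * mtr n (L t) * Rpower (sqrt (det n (g t))) (2 / INR n)).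
Proof.
  intros Ht. assert (Hn : INR n <> 0) by (apply not_0_INR; lia).
  assert (HD := det_g_pos t Ht). assert (Hs := sqrt_lt_R0 _ HD).
  assert (Hss := sqrt_sqrt _ (Rlt_le _ _ HD)).
  unfold Rpower. eapply D_eq.
  { apply D_exp, D_scal, D_ln; [exact Hs|]. apply D_sqrt; [exact HD|]. apply D_det_g, Ht. }
  field_simplify; try lra. rewrite <- Hss at 2. field. lra.
Qed.

Lemma tracefree_sq_nonneg t : t0 < t < t1 ->
  0 <= mtr n (mmul n (tracefree n (L t)) (tracefree n (L t))).
Proof.
  intros Ht. apply (mtr_sq_selfadjoint_nonneg n (g t) (ginv t)); auto.
  apply mmul_tracefree_sym; [apply g_sym | apply gL_sym]; exact Ht.
Qed.

Section ScalarCurvature.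
Variables (m : nat) (c : nat -> nat -> nat -> R).
Hypothesis c_anti : forall x y z, (x < n)%nat -> (y < n)%nat -> (z < n)%nat -> c x y z = - c y x z.

Lemma D_scal_curv t : t0 < t < t1 ->
  derivable_pt_lim (fun s => scal n m c (g s) (ginv s)) t
    (- 2 * mtr n (mmul n (ricci_endo n m c (g t) (ginv t)) (L t))).
Proof.
  intros Ht.
  assert (Pinv := hg_inv2 t Ht). assert (Psym := ginv_sym t Ht). assert (Hsym := g_sym t Ht).
  set (K := killing_mat n m c).
  apply D_ext_loc with (fun s => - / 4 * ad_pairing n c (ginv s) (ginv s) (g s)
     - / 2 * mtr n (mmul n (ginv s) K)).
  { destruct (interval_nbhd t0 t1 t Ht) as [d [Hd Hs]]. exists d; split; auto.
    intros s Hs'. symmetry. apply scal_decomposition; [apply ginv_sym | apply g_sym | apply hg_inv2]; auto. }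
  set (P' := fun a b => - 2 * mmul n (L t) (ginv t) a b).
  eapply D_eq.
  { apply D_minus; apply D_scal.
    - apply (D_ad_pairing n c ginv ginv g P' P' (fun a b => 2 * mmul n (g t) (L t) a b));
        intros; [apply D_ginv | apply D_ginv | apply hgL]; auto.
    - apply D_mtr_mmul_const. intros; apply D_ginv; auto. }
  rewrite (mtr_ricci_endo_mmul n c (ginv t) (g t) Hsym Pinv m (L t) (gL_sym t Ht)).
  rewrite (ad_pairing_swap n c c_anti (ginv t) P' (g t) Hsym).
  unfold P'. rewrite !ad_pairing_scal_l, ad_pairing_scal_r, mtr_mmul_scal_l.
  rewrite (ad_pairing_diag n c (ginv t) Psym). fold K. field.
Qed.

Variables (eps : R) (Ld : R -> mat) (du : R -> R).
Hypothesis hLd : forall t, t0 < t < t1 -> forall i j, (i < n)%nat -> (j < n)%nat ->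
  derivable_pt_lim (fun s => L s i j) t (Ld t i j).
Hypothesis heq1 : forall t, t0 < t < t1 -> forall i j, (i < n)%nat -> (j < n)%nat ->
  ricci_endo n m c (g t) (ginv t) i j - Ld t i j
    + (du t - mtr n (L t)) * L t i j + eps / 2 * delta i j = 0.

(* Substituting [L' = r + (u' - tr L) L + eps/2] from the soliton equation, the curvature
   terms [tr (r L)] cancel and only [tr (L0^2)] survives. *)
Lemma D_normalized_curvature t : t0 < t < t1 ->
  derivable_pt_lim (fun s => Rpower (sqrt (det n (g s))) (2 / INR n) *
      (scal n m c (g s) (ginv s) + mtr n (mmul n (tracefree n (L s)) (tracefree n (L s))))) t
    (- 2 * Rpower (sqrt (det n (g t))) (2 / INR n) * mtr n (mmul n (tracefree n (L t)) (tracefree n (L t)))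
       * ((- du t + mtr n (L t)) - / INR n * mtr n (L t))).
Proof.
  intros Ht. assert (Hn : INR n <> 0) by (apply not_0_INR; lia).
  eapply D_eq.
  { apply D_mult; [apply D_volume_power, Ht|].
    apply D_plus; [apply D_scal_curv, Ht | apply D_tracefree_sq; [lia | apply hLd, Ht]]. }
  set (r := ricci_endo n m c (g t) (ginv t)). set (T := mtr n (L t)).
  assert (HLd : forall i j, (i < n)%nat -> (j < n)%nat ->
     Ld t i j = r i j + (du t - T) * L t i j + eps / 2 * delta i j).
  { intros i j Hi Hj. assert (H := heq1 t Ht i j Hi Hj). unfold r, T. lra. }
  assert (E1 : mtr n (mmul n (L t) (Ld t))
               = mtr n (mmul n r (L t)) + (du t - T) * mtr n (mmul n (L t) (L t)) + eps / 2 * T).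
  { rewrite (mtr_ext n _ (mmul n (L t) (fun a b => 1 * r a b + (du t - T) * L t a b + eps / 2 * delta a b)))
      by (intros; apply mmul_ext; intros; [reflexivity | rewrite HLd by auto; ring]).
    rewrite mtr_mmul_lincomb, (mtr_mmul_comm n (L t) r).
    rewrite (mtr_ext n (mmul n (L t) delta) (L t)) by (intros; apply mmul_delta_r; auto).
    fold T. ring. }
  assert (E2 : mtr n (Ld t) = scal n m c (g t) (ginv t) + (du t - T) * T + eps / 2 * INR n).
  { rewrite (mtr_ext n _ (fun i j => r i j + (du t - T) * L t i j + eps / 2 * delta i j))
      by (intros; apply HLd; auto).
    unfold mtr at 1. rewrite !rsum_plus, !rsum_scal_l.
    rewrite (rsum_ext n (fun i => delta i i) (fun _ => 1)), rsum_const by (intros; apply delta_refl).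
    unfold scal, T, mtr. fold r. ring. }
  rewrite E1, E2, mtr_tracefree_sq by lia. fold T. field; auto.
Qed.

End ScalarCurvature.

End MetricCurve.

Theorem mainTheorem7
  (n m : nat) (hn : (1 <= n)%nat)
  (c : nat -> nat -> nat -> R)
  (hlie : is_lie_algebra (n + m) c)
  (hcpt : compact_type (n + m) c)
  (hred : reductive n m c)
  (hbg : k_invariant n m c (fun i j => delta i j))
  (eps : R) (t0 t1 : R) (ht : t0 < t1)
  (g ginv L Ld : R -> mat) (u du ddu : R -> R)
  (hg_pd : forall t, t0 < t < t1 -> sym_posdef n (g t))
  (hg_inv1 : forall t, t0 < t < t1 -> forall i j, (i < n)%nat -> (j < n)%nat ->
      mmul n (g t) (ginv t) i j = delta i j)
  (hg_inv2 : forall t, t0 < t < t1 -> forall i j, (i < n)%nat -> (j < n)%nat ->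
      mmul n (ginv t) (g t) i j = delta i j)
  (hg_inv : forall t, t0 < t < t1 -> k_invariant n m c (g t))
  (hgL : forall t, t0 < t < t1 -> forall i j, (i < n)%nat -> (j < n)%nat ->
      derivable_pt_lim (fun s => g s i j) t (2 * mmul n (g t) (L t) i j))
  (hLd : forall t, t0 < t < t1 -> forall i j, (i < n)%nat -> (j < n)%nat ->
      derivable_pt_lim (fun s => L s i j) t (Ld t i j))
  (hu : forall t, t0 < t < t1 -> derivable_pt_lim u t (du t))
  (hdu : forall t, t0 < t < t1 -> derivable_pt_lim du t (ddu t))
  (heq1 : forall t, t0 < t < t1 -> forall i j, (i < n)%nat -> (j < n)%nat ->
      ricci_endo n m c (g t) (ginv t) i j - Ld t i j
        + (du t - mtr n (L t)) * L t i j + eps / 2 * delta i j = 0)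
  (heq2 : forall t, t0 < t < t1 ->
      - mtr n (Ld t) - mtr n (mmul n (L t) (L t)) + ddu t + eps / 2 = 0)
  (hcons : exists C : R, forall t, t0 < t < t1 ->
      ddu t + (- du t + mtr n (L t)) * du t - eps * u t = C) :
  let v := fun t => sqrt (det n (g t)) in
  let S := fun t => scal n m c (g t) (ginv t) in
  let L0sq := fun t => mtr n (mmul n (tracefree n (L t)) (tracefree n (L t))) in
  let xi := fun t => - du t + mtr n (L t) in
  let F := fun t => Rpower (v t) (2 / INR n) * (S t + L0sq t) in
  (forall t, t0 < t < t1 ->
     derivable_pt_lim F t
       (- 2 * Rpower (v t) (2 / INR n) * L0sq t * (xi t - / INR n * mtr n (L t)))) /\
  (forall a b, t0 < a -> a <= b -> b < t1 ->
     (forall s, a <= s <= b -> xi s <= / INR n * mtr n (L s)) ->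
     F a <= F b).
Proof.
  intros v S L0sq xi F.
  assert (c_anti : forall x y z, (x < n)%nat -> (y < n)%nat -> (z < n)%nat -> c x y z = - c y x z)
    by (intros; apply (proj1 hlie); lia).
  assert (HF : forall t, t0 < t < t1 -> derivable_pt_lim F t
      (- 2 * Rpower (v t) (2 / INR n) * L0sq t * (xi t - / INR n * mtr n (L t))))
    by (intros; apply (D_normalized_curvature n hn t0 t1 g ginv L hg_pd hg_inv1 hg_inv2 hgL
                         m c c_anti eps Ld du hLd heq1); assumption).
  split; [exact HF|].
  intros a b Ha Hab Hb Hxi. apply (nondecreasing_of_derivative F _ t0 t1 HF); auto.
  intros s Hs.
  assert (0 < Rpower (v s) (2 / INR n)) by apply exp_pos.
  assert (0 <= L0sq s) by (apply (tracefree_sq_nonneg n t0 t1 g ginv L hg_pd hg_inv1 hg_inv2 hgL); lra).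
  assert (0 <= / INR n * mtr n (L s) - xi s) by (specialize (Hxi s Hs); lra).
  replace (- 2 * Rpower (v s) (2 / INR n) * L0sq s * (xi s - / INR n * mtr n (L s)))
    with (2 * Rpower (v s) (2 / INR n) * L0sq s * (/ INR n * mtr n (L s) - xi s)) by ring.
  repeat apply Rmult_le_pos; lra.
Qed.
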